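(* Let $\mathcal{M}=\{\nu_1,\dots,\nu_K\}$ be a finite set of probability measures on $\mathcal{A}^\infty$ ($\mathcal{A}$ finite or countable), and let $\varepsilon,\delta>0$. Consider the agent (Algorithm 1) that, using the uniform prior $w_\nu=1/K$ and Bayes mixture $\xi$, at each time step $t$ having observed $\omega_{<t}$ outputs $\xi(\cdot|\omega_{<t})$ if $\hat h_t(\omega_{<t})\le\varepsilon$ and outputs $\bot$ otherwise, then observes $\omega_t$. This agent is KWIK: for every $\mu\in\mathcal{M}$ it fails the run with $\mu$-probability at most $\delta$, and there is a finite number $B(\varepsilon,\delta)$ (depending also on $K$) such that, with $\mu$-probability at least $1-\delta$, it outputs $\bot$ at most $B(\varepsilon,\delta)$ times.
   Context: KWIK framework: the environment chooses an unknown $\mu\in\mathcal{M}$ and the sequence $\omega_1\omega_2\cdots$ is drawn from $\mu$. At each step $t$ the agent outputs either a predictive distribution $\rho(\cdot|\omega_{<t})$ on $\mathcal{A}$ or the symbol $\bot$; the run fails if the agent outputs $\rho$ with $h_{\omega_{<t}}(\rho,\mu)>\varepsilon$, otherwise $\omega_t$ is revealed and the run continues. Notation: $\mathcal{A}^\infty$ carries the $\sigma$-algebra generated by cylinders; $\rho(x):=\rho(\Gamma_x)$, $\rho(y|x):=\rho(xy)/\rho(x)$, $\omega_{<t}=\omega_1\cdots\omega_{t-1}$, $\rho_{<t}(\omega):=\rho(\omega_{<t})$. $\xi(A):=\frac1K\sum_{\nu\in\mathcal{M}}\nu(A)$. $h_x(\rho,\xi):=\sum_a(\sqrt{\rho(a|x)}-\sqrt{\xi(a|x)})^2$,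 $h_t(\nu,\xi)(\omega):=h_{\omega_{<t}}(\nu,\xi)$. With $w_\nu=1/K$ for all $\nu$, $\mathcal{M}_t:=\{\nu\in\mathcal{M}:\forall\tau\le t,\ \nu_{<\tau}/\xi_{<\tau}\ge\delta w_\mu/w_\nu\}=\{\nu:\forall\tau\le t,\ \nu_{<\tau}/\xi_{<\tau}\ge\delta\}$ and $\hat h_t:=\sup_{\nu\in\mathcal{M}_t}h_t(\nu,\xi)$. *)

From HB Require Import structures.
From mathcomp Require Import all_boot all_order all_algebra.
From mathcomp Require Import all_classical all_reals all_analysis.
Set Implicit Arguments. Unset Strict Implicit. Unset Printing Implicit Defensive.
Import Order.TTheory GRing.Theory Num.Theory.
Local Open Scope classical_set_scope.
Local Open Scope ring_scope.

(* Sequences omega = omega_1 omega_2 ... in A^oo are functions nat -> A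
   (omega_{t} is  omega (t-1)). *)

(* omega_{<t} for t = n+1 : the prefix of length n *)
Definition prefix (A : Type) (w : nat -> A) (n : nat) : seq A :=
  map w (iota 0 n).

Definition cylinder (A : Type) (x : seq A) : set (nat -> A) :=
  [set w | prefix w (size x) = x].

Definition cylinders (A : Type) : set (set (nat -> A)) :=
  [set C | exists x : seq A, C = cylinder x].

Definition seqspace (A : pointedType) := g_sigma_algebraType (@cylinders A).

(* rho(x) := rho(Gamma_x), as a real number (probability measures are finite) *)
Definition cyl (R : realType) (A : pointedType)
  (rho : probability (seqspace A) R) (x : seq A) : R :=
  fine (rho (cylinder x)).

Definition mixture (R : realType) (A : pointedType) (K : nat)
  (nu : 'I_K -> probability (seqspace A) R) (x : seq A) : R :=
  (K%:R)^-1 * \sum_(i < K) cyl (nu i) x.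

Definition condp (R : realType) (A : Type) (rho : seq A -> R) (x : seq A) (a : A) : R :=
  rho (rcons x a) / rho x.

Definition hell (R : realType) (A : choiceType) (x : seq A) (rho xi : seq A -> R)
  : \bar R :=
  (\esum_(a in [set: A]) (((Num.sqrt (condp rho x a) - Num.sqrt (condp xi x a)) ^+ 2)%:E))%E.

Definition inMt (R : realType) (A : Type) (delta : R) (nu xi : seq A -> R) (x : seq A) : Prop :=
  forall n, (n <= size x)%N -> delta <= nu (take n x) / xi (take n x).

Definition hath (R : realType) (A : pointedType) (K : nat)
  (nu : 'I_K -> probability (seqspace A) R) (delta : R) (x : seq A) : \bar R :=
  ereal_sup [set hell x (cyl (nu i)) (mixture nu) | i in [set i | inMt delta (cyl (nu i)) (mixture nu) x]].

Definition outputs_bot (R : realType) (A : pointedType) (K : nat)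
  (nu : 'I_K -> probability (seqspace A) R) (eps delta : R) (x : seq A) : bool :=
  (eps%:E < hath nu delta x)%E.

(* The run (with environment mu) fails: at some time t the agent outputs
   rho = xi(.|omega_{<t}) (i.e. does not output bottom) and h_{omega_{<t}}(rho, mu) > eps *)
Definition run_fails (R : realType) (A : pointedType) (K : nat)
  (nu : 'I_K -> probability (seqspace A) R) (eps delta : R)
  (mu : probability (seqspace A) R) : set (seqspace A) :=
  [set w | exists n : nat, ~~ outputs_bot nu eps delta (prefix w n) /\
          (eps%:E < hell (prefix w n) (mixture nu) (cyl mu))%E].

Definition few_bots (R : realType) (A : pointedType) (K : nat)
  (nu : 'I_K -> probability (seqspace A) R) (eps delta : R) (B : nat) : set (seqspace A) :=
  [set w | forall N : nat, (\sum_(n < N) (outputs_bot nu eps delta (prefix w n) : nat) <= B)%N].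

From Pilot Require Import Defs.
From HB Require Import structures.
From mathcomp Require Import all_boot all_order all_algebra.
From mathcomp Require Import all_classical all_reals all_analysis.
From mathcomp Require Import ring.
Set Implicit Arguments. Unset Strict Implicit. Unset Printing Implicit Defensive.
Import Order.TTheory GRing.Theory Num.Theory.
Local Open Scope classical_set_scope.
Local Open Scope ring_scope.
Local Notation prefix := Defs.prefix.

(* If the agent predicts at time t although h_t(xi, mu) > eps, then
   mu has left M_t, i.e. the likelihood ratio mu/xi dropped below delta at some
   tau <= t.  The ratio stopped at that time, multiplied by xi, is a
   supermartingale, so the drop has mu-probability at most delta.

   If the agent outputs bot after x, some nu_j in M_t has
   h_x(nu_j, xi) > eps and nu_j(x) >= delta xi(x) >= (delta/K) mu(x); hence
   mu(x) <= K/(eps delta) sum_j nu_j(x) h_x(nu_j, xi).  With b = sqrt(nu xi) one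
   has b(x) h_x(nu, xi) = 2 b(x) - 2 sum_a b(xa), so the expected Hellinger sums
   telescope and are at most 2K.  The expected number of bottoms is thus at most
   2K^3/(eps delta), and Markov's inequality gives B. *)

Lemma esumZl (R : realType) (T : choiceType) (I : set T) (a : T -> \bar R) (r : R) :
  0 <= r -> (forall i, 0 <= a i)%E ->
  (\esum_(i in I) (r%:E * a i) = r%:E * \esum_(i in I) a i)%E.
Proof.
move=> r0 a0; rewrite /esum -ereal_supZl //; last first.
  by apply/set0P; exists 0%E; exists set0; [exact: fsets_set0|rewrite fsbig_set0].
congr ereal_sup; apply/seteqP; split => x /=.
- move=> [F FI <-]; exists (\sum_(i \in F) a i)%E; first by exists F.
  by rewrite ge0_mule_fsumr.
- by move=> [y [F FI <-] <-]; exists F => //; rewrite ge0_mule_fsumr.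
Qed.

Lemma esumZr (R : realType) (T : choiceType) (I : set T) (a : T -> \bar R) (r : R) :
  0 <= r -> (forall i, 0 <= a i)%E ->
  (\esum_(i in I) (a i * r%:E) = (\esum_(i in I) a i) * r%:E)%E.
Proof.
by move=> r0 a0; rewrite muleC -esumZl//; apply: eq_esum => i _; exact: muleC.
Qed.
Arguments esumZl {R T} I a r.
Arguments esumZr {R T} I a r.

Lemma le_esum_nneg_subset (R : realType) (T : choiceType) (I J : set T)
    (a b : T -> \bar R) :
  I `<=` J -> (forall i, J i -> 0 <= b i)%E -> (forall i, I i -> a i <= b i)%E ->
  (\esum_(i in I) a i <= \esum_(i in J) b i)%E.
Proof.
move=> IJ b0 ab; rewrite (esum_mkcond I) (esum_mkcond J); apply: le_esum => i _.
case: ifPn => [/set_mem Ii|_]; first by rewrite ifT ?inE ?ab//; apply: IJ.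
by case: ifPn => // /set_mem /b0.
Qed.

Lemma measure_bigcup_esum d (T : measurableType d) (R : realType)
    (mu : {measure set T -> \bar R}) (J : choiceType) (j0 : J) (F : J -> set T) :
  countable [set: J] -> (forall j, measurable (F j)) -> trivIset setT F ->
  mu (\bigcup_j F j) = (\esum_(j in setT) mu (F j))%E.
Proof.
move=> /countable_injP[f finj] mF tF.
pose g := 'pinv_(fun=> j0) setT f.
have gf j : g (f j) = j by apply: (pinvKV _ finj); rewrite in_setT.
have -> : \bigcup_j F j = \bigcup_(n in range f) F (g n).
  by rewrite bigcup_image; apply: eq_bigcupr => j _; rewrite gf.
rewrite measure_bigcup//; last first.
  by move=> n m [i _ <-] [j _ <-]; rewrite !gf => /(tF _ _ I I) ->.
rewrite nneseries_esum// set_mem_set esum_image//.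
by apply: eq_esum => j _; rewrite gf.
Qed.

Lemma le_measure_nondecreasing_bigcup d (T : measurableType d) (R : realType)
    (mu : {measure set T -> \bar R}) (F : nat -> set T) (c : \bar R) :
  (forall n, measurable (F n)) -> {homo F : n m / (n <= m)%N >-> (n <= m)%O} ->
  (forall n, mu (F n) <= c)%E -> (mu (\bigcup_n F n) <= c)%E.
Proof.
move=> mF homF le.
have h := @nondecreasing_cvg_mu _ _ _ mu F mF (bigcupT_measurable _ mF) homF.
by rewrite -(cvg_lim _ h)//; apply: lime_le; [exact: cvgP h|exact: nearW].
Qed.

Lemma size_prefix (A : Type) (w : nat -> A) n : size (prefix w n) = n.
Proof. by rewrite /prefix size_map size_iota. Qed.

Lemma prefixS (A : Type) (w : nat -> A) n : prefix w n.+1 = rcons (prefix w n) (w n).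
Proof. by rewrite /prefix -addn1 iotaD map_cat cats1. Qed.

Lemma take_prefix (A : Type) (w : nat -> A) m n :
  (m <= n)%N -> take m (prefix w n) = prefix w m.
Proof. by move=> mn; rewrite /prefix -map_take take_iota (minn_idPl mn). Qed.

Lemma measurable_cylinder (A : pointedType) (x : seq A) :
  measurable (cylinder x : set (seqspace A)).
Proof. by apply: sub_gen_smallest; exists x. Qed.

Lemma countable_seq (A : Type) : countable [set: A] -> countable [set: seq A].
Proof.
move=> /countable_injP[f finj]; apply/countable_injP.
have finj' : injective f by move=> a b; apply: finj; rewrite in_setT.
exists (fun s => pickle (map f s)) => s t _ _ /(pcan_inj pickleK).
exact: inj_map.
Qed.

Lemma prefix_setE (A : pointedType) n (Q : seq A -> Prop) :
  [set w : seqspace A | Q (prefix w n)] =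
  \bigcup_x (if x \in [set x : seq A | size x = n /\ Q x] then cylinder x else set0).
Proof.
apply/seteqP; split => w /=.
- move=> Qw; exists (prefix w n) => //; rewrite ifT; last first.
    by rewrite inE /=; split => //; exact: size_prefix.
  by rewrite /cylinder /= size_prefix.
- by move=> [x _]; case: ifPn => //; rewrite inE => -[sx Qx]; rewrite /cylinder/= sx => ->.
Qed.

Lemma measurable_prefix_set (A : pointedType) n (Q : seq A -> Prop) :
  countable [set: A] -> measurable [set w : seqspace A | Q (prefix w n)].
Proof.
move=> cA; rewrite prefix_setE; apply: countable_bigcupT_measurable.
  exact: countable_seq.
by move=> x; case: ifPn => _; [exact: measurable_cylinder|exact: measurable0].
Qed.

Lemma measure_prefix_set (R : realType) (A : pointedType) (P : probability (seqspace A) R)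
    n (Q : seq A -> Prop) : countable [set: A] ->
  P [set w : seqspace A | Q (prefix w n)] =
  (\esum_(x in [set x : seq A | size x = n /\ Q x]) P (cylinder x))%E.
Proof.
move=> cA; rewrite prefix_setE (measure_bigcup_esum _ [::]).
- rewrite [in RHS]esum_mkcond; apply: eq_esum => x _.
  by case: ifPn => _ //; rewrite measure0.
- exact: countable_seq.
- by move=> x; case: ifPn => _; [exact: measurable_cylinder|exact: measurable0].
- move=> x y _ _ [w []]; case: ifPn => [|_ []//]; rewrite inE => -[sx _].
  case: ifPn => [|_ _ []//]; rewrite inE => -[sy _].
  by rewrite /cylinder/= => <- <-; rewrite sx sy.
Qed.

Lemma cylinder_rcons_bigcup (A : pointedType) (x : seq A) :
  cylinder x = \bigcup_a (cylinder (rcons x a) : set (seqspace A)).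
Proof.
apply/seteqP; split => w /=.
- by rewrite /cylinder/= => wx; exists (w (size x)) => //=; rewrite size_rcons prefixS wx.
- by move=> [a _]; rewrite /cylinder/= size_rcons prefixS => /rcons_inj[].
Qed.

Lemma measure_cylinder_rcons (R : realType) (A : pointedType)
    (P : probability (seqspace A) R) (x : seq A) : countable [set: A] ->
  P (cylinder x) = (\esum_(a in setT) P (cylinder (rcons x a)))%E.
Proof.
move=> cA; rewrite cylinder_rcons_bigcup (measure_bigcup_esum _ point)//.
- by move=> a; exact: measurable_cylinder.
- by move=> a b _ _ [w []]; rewrite /cylinder/= !size_rcons => -> /rcons_inj[].
Qed.

Lemma cylE (R : realType) (A : pointedType) (P : probability (seqspace A) R) (x : seq A) :
  (cyl P x)%:E = P (cylinder x).
Proof.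
rewrite /cyl fineK// ge0_fin_numE//; apply: (le_lt_trans (probability_le1 _ _)).
  exact: measurable_cylinder.
by rewrite ltry.
Qed.

Lemma cyl_ge0 (R : realType) (A : pointedType) (P : probability (seqspace A) R) (x : seq A) :
  0 <= cyl P x.
Proof. by rewrite -lee_fin cylE. Qed.

Lemma cyl_nil (R : realType) (A : pointedType) (P : probability (seqspace A) R) :
  cyl P [::] = 1.
Proof.
rewrite /cyl; have -> : cylinder [::] = [set: seqspace A] by apply/seteqP; split.
by rewrite probability_setT.
Qed.

Definition level (A : Type) n := [set x : seq A | size x = n].

Record prefix_prob (R : realType) (A : choiceType) (p : seq A -> R) : Prop := PrefixProb {
  prefix_prob_ge0 : forall x, 0 <= p x;
  prefix_prob_nil : p [::] = 1;
  prefix_prob_rcons : forall x, (p x)%:E = (\esum_(a in setT) (p (rcons x a))%:E)%E }.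

Lemma level0 (A : Type) : level 0 = [set [::] : seq A].
Proof. by apply/seteqP; split => x; rewrite /level/=; [move/size0nil|move=> ->]. Qed.

Lemma esum_level_succ (R : realType) (A : choiceType) (f : seq A -> \bar R) n :
  (forall x, 0 <= f x)%E ->
  (\esum_(x in level n.+1) f x = \esum_(x in level n) \esum_(a in setT) f (rcons x a))%E.
Proof.
move=> f0; rewrite (esum_esum (J := fun=> setT)); last by move=> *; exact: f0.
apply: (reindex_esum (level n `*`` fun=> setT) (level n.+1) (fun k => rcons k.1 k.2)).
split.
- by move=> [x a] [/= sx _]; rewrite /level/= size_rcons sx.
- by move=> [x a] [y b] _ _ /= /rcons_inj[-> ->].
- move=> y; rewrite /level/=; case/lastP: y => [//|x a]; rewrite size_rcons => -[sx].
  by exists (x, a).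
Qed.

Lemma prefix_prob_cyl (R : realType) (A : pointedType) (P : probability (seqspace A) R) :
  countable [set: A] -> prefix_prob (cyl P).
Proof.
move=> cA; split; [exact: cyl_ge0|exact: cyl_nil|] => x.
by rewrite cylE measure_cylinder_rcons//; apply: eq_esum => a _; rewrite cylE.
Qed.

Lemma mixture_ge0 (R : realType) (A : pointedType) K
    (nu : 'I_K -> probability (seqspace A) R) x :
  0 <= mixture nu x.
Proof. by rewrite /mixture mulr_ge0 ?invr_ge0// sumr_ge0// => i _; exact: cyl_ge0. Qed.

Lemma prefix_prob_mixture (R : realType) (A : pointedType) K
    (nu : 'I_K -> probability (seqspace A) R) :
  (0 < K)%N -> countable [set: A] -> prefix_prob (mixture nu).
Proof.
move=> K0 cA; split; [exact: mixture_ge0| |] => [|x].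
  rewrite /mixture (eq_bigr (fun=> 1)) => [|i _]; last exact: cyl_nil.
  by rewrite sumr_const card_ord mulVf// pnatr_eq0 -lt0n.
rewrite /mixture EFinM -sumEFin.
under eq_bigr => i _ do rewrite (prefix_prob_rcons (prefix_prob_cyl (nu i) cA)).
rewrite -esum_sum; last by move=> *; rewrite lee_fin cyl_ge0.
rewrite -esumZl ?invr_ge0//; last first.
  by move=> a; rewrite sume_ge0// => *; rewrite lee_fin cyl_ge0.
by apply: eq_esum => a _; rewrite EFinM sumEFin.
Qed.

Lemma cyl_le_mixture (R : realType) (A : pointedType) K
    (nu : 'I_K -> probability (seqspace A) R) j x :
  (0 < K)%N -> cyl (nu j) x <= K%:R * mixture nu x.
Proof.
move=> K0; rewrite /mixture mulrA mulfV ?pnatr_eq0 -?lt0n// mul1r.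
by rewrite (bigD1 j)//= lerDl sumr_ge0// => i _; exact: cyl_ge0.
Qed.

Lemma prefix_prob_rcons_le (R : realType) (A : choiceType) (p : seq A -> R) x a :
  prefix_prob p -> p (rcons x a) <= p x.
Proof.
move=> pp; rewrite -lee_fin (prefix_prob_rcons pp x); apply: esum_ge; exists [set a].
  by split; [exact: finite_set1|].
by rewrite fsbig_set1.
Qed.

Lemma esum_level_take (R : realType) (A : choiceType) (p f : seq A -> R) m n :
  prefix_prob p -> (forall x, 0 <= f x) -> (m <= n)%N ->
  (\esum_(x in level n) (p x * f (take m x))%:E = \esum_(y in level m) (p y * f y)%:E)%E.
Proof.
case=> p0 p1 ps f0; elim: n => [|n IH].
  by rewrite leqn0 => /eqP ->; apply: eq_esum => x; rewrite /level/= => /size0nil ->.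
rewrite leq_eqVlt => /orP[/eqP <-|].
  by apply: eq_esum => x; rewrite /level/= => <-; rewrite take_size.
rewrite ltnS => mn; rewrite -IH// esum_level_succ; last by move=> x; rewrite lee_fin mulr_ge0.
apply: eq_esum => x; rewrite /level/= => sx.
transitivity (\esum_(a in setT) ((p (rcons x a))%:E * (f (take m x))%:E))%E.
  by apply: eq_esum => a _; rewrite -cats1 takel_cat ?sx// EFinM.
rewrite esumZr; [by rewrite -ps EFinM|exact: f0|by move=> a; rewrite lee_fin].
Qed.

Lemma hell_ge0 (R : realType) (A : choiceType) (x : seq A) (rho xi : seq A -> R) :
  (0 <= hell x rho xi)%E.
Proof. by apply: esum_ge0 => a _; rewrite lee_fin sqr_ge0. Qed.

Lemma hellC (R : realType) (A : choiceType) (x : seq A) (p q : seq A -> R) :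
  hell x p q = hell x q p.
Proof. by apply: eq_esum => a _; rewrite -sqrrN opprB. Qed.

Lemma sqrt_mul_subr_sqr (R : realType) (u v n s : R) :
  0 < u -> 0 < v -> 0 <= n -> 0 <= s ->
  Num.sqrt (u * v) * (Num.sqrt (n / u) - Num.sqrt (s / v)) ^+ 2 + 2 * Num.sqrt (n * s)
  = Num.sqrt (v / u) * n + Num.sqrt (u / v) * s.
Proof.
move=> u0 v0 n0 s0.
rewrite -(sqr_sqrtr (ltW u0)) -(sqr_sqrtr (ltW v0)) -(sqr_sqrtr n0) -(sqr_sqrtr s0).
have a0 : 0 < Num.sqrt u by rewrite sqrtr_gt0.
have b0 : 0 < Num.sqrt v by rewrite sqrtr_gt0.
have al0 := sqrtr_ge0 n; have be0 := sqrtr_ge0 s.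
rewrite -!exprMn -!expr_div_n !sqrtr_sqr.
rewrite !ger0_norm ?divr_ge0 ?mulr_ge0 ?(ltW a0) ?(ltW b0)//.
by field; rewrite !lt0r_neq0.
Qed.

Lemma sqrt_div_mulr_addr (R : realType) (u v : R) : 0 < u -> 0 < v ->
  Num.sqrt (v / u) * u + Num.sqrt (u / v) * v = 2 * Num.sqrt (u * v).
Proof.
move=> u0 v0; rewrite -(sqr_sqrtr (ltW u0)) -(sqr_sqrtr (ltW v0)).
have a0 : 0 < Num.sqrt u by rewrite sqrtr_gt0.
have b0 : 0 < Num.sqrt v by rewrite sqrtr_gt0.
rewrite -!expr_div_n -exprMn !sqrtr_sqr !ger0_norm ?divr_ge0 ?mulr_ge0 ?ltW//.
by field; rewrite !lt0r_neq0.
Qed.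

Section HellingerTelescope.
Variables (R : realType) (A : choiceType) (nu xi : seq A -> R) (c : R).
Hypotheses (pnu : prefix_prob nu) (pxi : prefix_prob xi).
Hypotheses (c_gt0 : 0 < c) (nu_le : forall x, nu x <= c * xi x).

Let geomean y := Num.sqrt (nu y * xi y).

Let geomean_ge0 y : (0 <= (geomean y)%:E)%E.
Proof. by rewrite lee_fin sqrtr_ge0. Qed.

Lemma hell_telescope_step y :
  ((geomean y)%:E * hell y nu xi + 2%:E * (\esum_(a in setT) (geomean (rcons y a))%:E)
   = 2%:E * (geomean y)%:E)%E.
Proof.
have [nu0|nun0] := eqVneq (nu y) 0.
  have nu_rcons0 a : nu (rcons y a) = 0.
    by apply/le_anti; rewrite prefix_prob_ge0// andbT -nu0 prefix_prob_rcons_le.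
  rewrite /geomean nu0 mul0r sqrtr0 mul0e add0e esum1 ?mule0// => a _.
  by rewrite nu_rcons0 mul0r sqrtr0.
have u0 : 0 < nu y by rewrite lt0r nun0 prefix_prob_ge0.
have v0 : 0 < xi y by have := lt_le_trans u0 (nu_le y); rewrite pmulr_rgt0.
have nu0 := prefix_prob_ge0 pnu; have xi0 := prefix_prob_ge0 pxi.
rewrite /hell -(esumZl _ _ (geomean y)) ?sqrtr_ge0//; last first.
  by move=> a; rewrite lee_fin sqr_ge0.
rewrite -(esumZl _ _ 2)// -esumD; first last.
- by move=> a _; rewrite lee_fin mulr_ge0 ?sqrtr_ge0.
- by move=> a _; rewrite lee_fin mulr_ge0 ?sqrtr_ge0 ?sqr_ge0.
transitivity (\esum_(a in setT) ((Num.sqrt (xi y / nu y))%:E * (nu (rcons y a))%:E +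
   (Num.sqrt (nu y / xi y))%:E * (xi (rcons y a))%:E))%E.
  apply: eq_esum => a _; rewrite -!EFinM -!EFinD.
  by rewrite /condp /geomean sqrt_mul_subr_sqr.
rewrite esumD; try by move=> *; rewrite lee_fin ?mulr_ge0 ?sqrtr_ge0.
rewrite !esumZl; try by move=> *; rewrite ?lee_fin ?sqrtr_ge0.
by rewrite -(prefix_prob_rcons pnu) -(prefix_prob_rcons pxi) -!EFinM -EFinD
  sqrt_div_mulr_addr.
Qed.

Lemma sum_hell_telescope n :
  ((\sum_(m < n) \esum_(y in level m) ((geomean y)%:E * hell y nu xi))
   + 2%:E * (\esum_(y in level n) (geomean y)%:E) = 2%:E)%E.
Proof.
elim: n => [|n IH].
  rewrite big_ord0 add0e level0 esum_set1//.
  by rewrite /geomean !prefix_prob_nil// mulr1 sqrtr1 mule1.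
rewrite big_ord_recr /= -addeA -[RHS]IH; congr (_ + _)%E.
rewrite esum_level_succ// -!(esumZl _ _ 2)//; last by move=> x; exact: esum_ge0.
rewrite -esumD; last 2 first.
- by move=> y _; rewrite mule_ge0// hell_ge0.
- by move=> y _; rewrite mule_ge0// esum_ge0.
by apply: eq_esum => y _; rewrite hell_telescope_step.
Qed.

Lemma le_geomean y : 1 <= c -> nu y <= c * geomean y.
Proof.
move=> c1; have n0 := prefix_prob_ge0 pnu y; have x0 := prefix_prob_ge0 pxi y.
have c0 : 0 <= c by apply: le_trans c1.
have -> : c * geomean y = Num.sqrt (c ^+ 2 * (nu y * xi y)).
  by rewrite /geomean (sqrtrM _ (sqr_ge0 c)) sqrtr_sqr ger0_norm.
rewrite -{1}(ger0_norm n0) -sqrtr_sqr ler_sqrt; last by rewrite !mulr_ge0 ?sqr_ge0.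
rewrite expr2 (le_trans (ler_wpM2l n0 (nu_le y)))// mulrCA.
by rewrite ler_wpM2r ?mulr_ge0// expr2 ler_peMr.
Qed.

Lemma sum_hell_le n : 1 <= c ->
  (\sum_(m < n) \esum_(y in level m) ((nu y)%:E * hell y nu xi) <= (c * 2)%:E)%E.
Proof.
move=> c1.
have hyp m : (0 <= \esum_(y in level m) ((geomean y)%:E * hell y nu xi))%E.
  by apply: esum_ge0 => y _; rewrite mule_ge0 ?hell_ge0.
apply: (@le_trans _ _ (\sum_(m < n)
    (c%:E * \esum_(y in level m) ((geomean y)%:E * hell y nu xi)))%E).
  apply: lee_sum => m _; rewrite -esumZl; last 2 first.
  - exact: ltW.
  - by move=> y; rewrite mule_ge0 ?hell_ge0.
  apply: le_esum => y _; rewrite muleA -EFinM lee_wpmul2r ?hell_ge0// lee_fin.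
  exact: le_geomean.
rewrite -ge0_sume_distrr// EFinM lee_pmul2l ?lte_fin// -(sum_hell_telescope n).
by rewrite leeDl// mule_ge0// esum_ge0.
Qed.

End HellingerTelescope.

Lemma le_mul_of_ratio_lt (R : realType) (m x c d : R) :
  0 <= x -> m <= c * x -> m / x < d -> m <= d * x.
Proof.
move=> x0 mcx; have [x_eq0 _|xn0] := eqVneq x 0.
  by move: mcx; rewrite x_eq0 !mulr0.
by rewrite ltr_pdivrMr ?lt0r ?xn0// => /ltW.
Qed.

Section LikelihoodRatio.
Variables (R : realType) (A : choiceType) (mu xi : seq A -> R) (d c : R).
Hypotheses (pmu : prefix_prob mu) (pxi : prefix_prob xi).
Hypotheses (d_ge0 : 0 <= d) (mu_le : forall x, mu x <= c * xi x).

Definition ratio_drops N (x : seq A) :=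
  exists m, (m <= N)%N /\ mu (take m x) / xi (take m x) < d.

(* xi times the likelihood ratio mu/xi stopped when it first drops below d:
   a supermartingale under xi whose initial value is at most d. *)
Definition stopped_ratio N (x : seq A) : R :=
  if `[< ratio_drops N x >] then mu x else d * xi x.

Lemma stopped_ratio_ge0 N x : 0 <= stopped_ratio N x.
Proof.
rewrite /stopped_ratio; case: ifP => _; first exact: prefix_prob_ge0.
by rewrite mulr_ge0// prefix_prob_ge0.
Qed.

Lemma stopped_ratio_rcons N x : size x = N ->
  (\esum_(a in setT) (stopped_ratio N.+1 (rcons x a))%:E <= (stopped_ratio N x)%:E)%E.
Proof.
move=> sx.
have take_rcons a m : (m <= N)%N -> take m (rcons x a) = take m x.
  by move=> mN; rewrite -cats1 takel_cat// sx.
rewrite {2}/stopped_ratio; case: ifPn => [/asboolP [m [mN lt]]|/asboolPn nodrop].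
  rewrite (prefix_prob_rcons pmu x); apply: le_esum => a _; rewrite /stopped_ratio ifT//.
  by apply/asboolP; exists m; rewrite take_rcons// leqW.
rewrite EFinM (prefix_prob_rcons pxi) -esumZl//; last first.
  by move=> a; rewrite lee_fin prefix_prob_ge0.
apply: le_esum => a _; rewrite /stopped_ratio.
case: ifPn => [/asboolP [m [mN lt]]|_]; last by rewrite EFinM.
have mE : m = N.+1.
  apply/eqP; rewrite eqn_leq mN ltnNge; apply/negP => mN'.
  by apply: nodrop; exists m; rewrite -(take_rcons a).
move: lt; rewrite mE -sx -(size_rcons x a) take_size => lt.
by rewrite lee_fin (le_mul_of_ratio_lt _ (mu_le _) lt)// prefix_prob_ge0.
Qed.

Lemma esum_level_stopped_ratio N :
  (\esum_(x in level N) (stopped_ratio N x)%:E <= d%:E)%E.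
Proof.
elim: N => [|N IH].
  rewrite level0 esum_set1 ?lee_fin ?stopped_ratio_ge0// /stopped_ratio.
  rewrite !prefix_prob_nil//; case: ifPn => [/asboolP [m [_ lt]]|_]; last by rewrite mulr1.
  by move: lt; rewrite /= !prefix_prob_nil// divr1 => /ltW.
apply: le_trans IH; rewrite esum_level_succ; last first.
  by move=> x; rewrite lee_fin stopped_ratio_ge0.
by apply: le_esum => x sx; exact: stopped_ratio_rcons.
Qed.

End LikelihoodRatio.

(* Ville's maximal inequality for the likelihood ratio mu/xi. *)
Lemma measure_ratio_drop (R : realType) (A : pointedType) (P : probability (seqspace A) R)
    (xi : seq A -> R) (d c : R) :
  countable [set: A] -> prefix_prob xi -> 0 < d -> (forall x, cyl P x <= c * xi x) ->
  (P (\bigcup_N [set w : seqspace A | ratio_drops (cyl P) xi d N (prefix w N)])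
   <= d%:E)%E.
Proof.
move=> cA pxi d0 P_le.
have pP := prefix_prob_cyl P cA.
apply: le_measure_nondecreasing_bigcup => [N|n m nm|N].
- exact: measurable_prefix_set.
- apply/subsetPset => w [k [kn lt]]; exists k; split; first exact: leq_trans nm.
  by move: lt; rewrite !take_prefix// (leq_trans kn).
- rewrite /= measure_prefix_set//.
  apply: (le_trans _ (esum_level_stopped_ratio pP pxi (ltW d0) P_le N)).
  apply: le_esum_nneg_subset => [x []//|x _|x [_ drop]].
    by rewrite lee_fin stopped_ratio_ge0 ?ltW.
  by rewrite -cylE /stopped_ratio ifT//; exact/asboolP.
Qed.

Section Agent.
Variables (R : realType) (K : nat) (eps delta : R) (A : pointedType).
Variables (nu : 'I_K -> probability (seqspace A) R) (i : 'I_K).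
Hypotheses (K_gt0 : (0 < K)%N) (eps_gt0 : 0 < eps) (delta_gt0 : 0 < delta).
Hypothesis (countableA : countable [set: A]).

Lemma run_fails_sub_ratio_drop :
  run_fails nu eps delta (nu i) `<=`
  \bigcup_N [set w : seqspace A | ratio_drops (cyl (nu i)) (mixture nu) delta N (prefix w N)].
Proof.
move=> w [n [nobot hell_gt]]; exists n => //; apply: contrapT => nodrop.
have inM : inMt delta (cyl (nu i)) (mixture nu) (prefix w n).
  move=> m; rewrite size_prefix => mn; rewrite leNgt; apply/negP => lt.
  by apply: nodrop; exists m.
have : (hell (prefix w n) (cyl (nu i)) (mixture nu) <= hath nu delta (prefix w n))%E.
  by apply: ereal_sup_ubound; exists i.
move: nobot; rewrite /outputs_bot -leNgt => hath_le /le_trans/(_ hath_le).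
by rewrite hellC leNgt hell_gt.
Qed.

Lemma measurable_run_fails (mu : probability (seqspace A) R) :
  measurable (run_fails nu eps delta mu).
Proof.
pose Q (x : seq A) := ~~ outputs_bot nu eps delta x /\
  (eps%:E < hell x (mixture nu) (cyl mu))%E.
have -> : run_fails nu eps delta mu = \bigcup_n [set w : seqspace A | Q (prefix w n)].
  by apply/seteqP; split => w /= [n]; [move=> h; exists n|move=> _ h; exists n].
by apply: bigcupT_measurable => n; exact: measurable_prefix_set.
Qed.

Lemma measure_run_fails : (nu i (run_fails nu eps delta (nu i)) <= delta%:E)%E.
Proof.
have pxi := prefix_prob_mixture nu K_gt0 countableA.
apply: le_trans (measure_ratio_drop countableA pxi delta_gt0
  (fun x => cyl_le_mixture nu i x K_gt0)).
apply: le_measure (run_fails_sub_ratio_drop); rewrite inE.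
  exact: measurable_run_fails.
by apply: bigcupT_measurable => N; exact: measurable_prefix_set.
Qed.

Let bot_bound := K%:R / (eps * delta).

Let bot_bound_ge0 : 0 <= bot_bound.
Proof. by rewrite divr_ge0// mulr_ge0// ltW. Qed.

Let weighted_hell_ge0 j y : (0 <= (cyl (nu j) y)%:E * hell y (cyl (nu j)) (mixture nu))%E.
Proof. by rewrite mule_ge0 ?hell_ge0// lee_fin cyl_ge0. Qed.

Lemma cyl_outputs_bot_le y :
  ((cyl (nu i) y * (outputs_bot nu eps delta y)%:R)%:E <=
   bot_bound%:E * \sum_(j < K) ((cyl (nu j) y)%:E * hell y (cyl (nu j)) (mixture nu)))%E.
Proof.
have [|_] := boolP (outputs_bot nu eps delta y); last first.
  by rewrite mulr0 mule_ge0 ?lee_fin// sume_ge0.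
rewrite mulr1 /outputs_bot /hath => /ereal_sup_gt[_ [j Mj <-] hell_gt].
have := Mj (size y) (leqnn _); rewrite take_size => ratio_ge.
have xi_gt0 : 0 < mixture nu y.
  rewrite lt0r mixture_ge0 andbT; apply: contraTneq ratio_ge => ->.
  by rewrite invr0 mulr0 -ltNge.
have nuj_ge : delta * mixture nu y <= cyl (nu j) y by rewrite -ler_pdivlMr.
apply: (@le_trans _ _ (bot_bound%:E * ((cyl (nu j) y)%:E * eps%:E)))%E; last first.
  rewrite lee_wpmul2l ?lee_fin// (le_trans (lee_wpmul2l _ (ltW hell_gt)))//.
    by rewrite lee_fin cyl_ge0.
  by rewrite (bigD1 j)//= leeDl// sume_ge0.
rewrite -!EFinM lee_fin (le_trans (cyl_le_mixture nu i y K_gt0))//.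
have -> : bot_bound * (cyl (nu j) y * eps) = K%:R * (cyl (nu j) y / delta).
  by rewrite /bot_bound; field; rewrite !lt0r_neq0.
by rewrite ler_wpM2l// ler_pdivlMr// mulrC.
Qed.

Lemma expected_outputs_bot_le N :
  (\sum_(n < N) \esum_(y in level n) (cyl (nu i) y * (outputs_bot nu eps delta y)%:R)%:E
   <= (bot_bound * (K%:R * (K%:R * 2)))%:E)%E.
Proof.
have level_le n : (\esum_(y in level n) (cyl (nu i) y * (outputs_bot nu eps delta y)%:R)%:E
    <= bot_bound%:E * \sum_(j < K) \esum_(y in level n)
        ((cyl (nu j) y)%:E * hell y (cyl (nu j)) (mixture nu)))%E.
  rewrite -esum_sum; last by move=> *; exact: weighted_hell_ge0.
  rewrite -esumZl//; last by move=> y; rewrite sume_ge0.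
  by apply: le_esum => y _; exact: cyl_outputs_bot_le.
apply: le_trans; first by apply: lee_sum => n _; exact: level_le.
rewrite -ge0_sume_distrr; last by move=> n _; rewrite sume_ge0// => j _; exact: esum_ge0.
rewrite [X in (_ <= X)%E]EFinM lee_wpmul2l ?lee_fin// exchange_big /=.
apply: (@le_trans _ _ (\sum_(j < K) (K%:R * 2)%:E)%E); last first.
  by rewrite sumEFin sumr_const card_ord lee_fin [leRHS]mulr_natl.
apply: lee_sum => j _; apply: sum_hell_le; rewrite ?ler1n//.
- exact: prefix_prob_cyl.
- exact: prefix_prob_mixture.
- by rewrite ltr0n.
- by move=> x; exact: cyl_le_mixture.
Qed.

Definition bots_before N (x : seq A) : nat :=
  (\sum_(n < N) (outputs_bot nu eps delta (take n x) : nat))%N.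

Lemma bots_before_prefix N (w : nat -> A) :
  bots_before N (prefix w N) = (\sum_(n < N) (outputs_bot nu eps delta (prefix w n) : nat))%N.
Proof. by apply: eq_bigr => n _; rewrite take_prefix// ltnW. Qed.

Lemma expected_bots_before_le N :
  (\esum_(x in level N) (cyl (nu i) x * (bots_before N x)%:R)%:E
   <= (bot_bound * (K%:R * (K%:R * 2)))%:E)%E.
Proof.
apply: le_trans (expected_outputs_bot_le N); rewrite le_eqVlt; apply/orP; left; apply/eqP.
transitivity (\esum_(x in level N) \sum_(n < N)
    (cyl (nu i) x * (outputs_bot nu eps delta (take n x))%:R)%:E)%E.
  by apply: eq_esum => x _; rewrite sumEFin -mulr_sumr natr_sum.
rewrite esum_sum; last by move=> *; rewrite lee_fin mulr_ge0// cyl_ge0.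
apply: eq_bigr => n _.
rewrite (esum_level_take (f := fun y => (outputs_bot nu eps delta y)%:R))//.
- exact: prefix_prob_cyl.
- exact: ltnW.
Qed.

Lemma measure_few_bots (B : nat) : bot_bound * (K%:R * (K%:R * 2)) <= delta * B.+1%:R ->
  ((1 - delta)%:E <= nu i (few_bots nu eps delta B))%E.
Proof.
move=> hB; pose many N x := (B < bots_before N x)%N.
pose E N := [set w : seqspace A | many N (prefix w N)].
have mE N : measurable (E N) by exact: measurable_prefix_set N (many N) countableA.
have homE : {homo E : n m / (n <= m)%N >-> (n <= m)%O}.
  move=> n m nm; apply/subsetPset => w; rewrite /E /many /= !bots_before_prefix.
  move=> /leq_trans; apply.
  rewrite -!(big_mkord xpredT (fun k => (outputs_bot nu eps delta (prefix w k) : nat))).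
  by rewrite [X in (_ <= X)%N](@big_cat_nat _ _ _ n) //= leq_addr.
have -> : few_bots nu eps delta B = ~` \bigcup_N E N.
  apply/seteqP; split => w /=.
  - by move=> h [N _]; rewrite /E /many /= bots_before_prefix ltnNge h.
  - move=> h N; rewrite leqNgt; apply/negP => lt; apply: h; exists N => //.
    by rewrite /E /many /= bots_before_prefix.
have E_le N : (nu i (E N) <= delta%:E)%E.
  rewrite (measure_prefix_set (nu i) N (many N) countableA).
  apply: (@le_trans _ _ (\esum_(x in level N)
     ((B.+1)%:R^-1%:E * (cyl (nu i) x * (bots_before N x)%:R)%:E))%E).
    apply: le_esum_nneg_subset => [x []//|x _|x [_ manyx]].
      by rewrite mule_ge0// lee_fin ?invr_ge0// mulr_ge0// cyl_ge0.
    rewrite -cylE -EFinM lee_fin mulrCA ler_peMr ?cyl_ge0//.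
    by rewrite ler_pdivlMl// mulr1 ler_nat.
  rewrite esumZl//; last by move=> x; rewrite lee_fin mulr_ge0// cyl_ge0.
  apply: le_trans (lee_wpmul2l _ (expected_bots_before_le N)) _; first by rewrite lee_fin invr_ge0.
  by rewrite -EFinM lee_fin mulrC ler_pdivrMr// mulrC.
rewrite probability_setC ?EFinB; last exact: bigcupT_measurable.
by apply: leeB => //; exact: le_measure_nondecreasing_bigcup.
Qed.

End Agent.

Theorem theorem9 (R : realType) (K : nat) (eps delta : R) :
  (0 < K)%N -> 0 < eps -> 0 < delta ->
  exists B : nat,
    forall (A : pointedType) (nu : 'I_K -> probability (seqspace A) R),
      countable [set: A] -> injective nu ->
      forall i : 'I_K,
        (nu i (run_fails nu eps delta (nu i)) <= delta%:E)%E /\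
        ((1 - delta)%:E <= nu i (few_bots nu eps delta B))%E.
Proof.
move=> K0 eps0 delta0.
pose C := K%:R / (eps * delta) * (K%:R * (K%:R * 2)).
exists (Num.truncn (C / delta)) => A nu cA _ i; split.
  exact: measure_run_fails.
apply: measure_few_bots => //.
by have := truncnS_gt (C / delta); rewrite ltr_pdivrMr// mulrC => /ltW.
Qed.
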